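(* Let $\mathbf P\in\mathbb{R}^{n\times n}$ be symmetric positive definite and $\mathbf c\in\mathbb{R}^n$, and let $\ell^*_{\mathbf c,\mathbf P}=\sup_{\beta\in\mathcal{I}_{\mathbf P}}\ell_{\mathbf c,\mathbf P}(\beta)$, with $\ell_{\mathbf c,\mathbf P}$ and $\mathcal{I}_{\mathbf P}$ as defined below. Then $$\mathcal{E}(\mathbf c,\mathbf P)\subseteq \operatorname{int}\mathcal{B}(\mathbf 0,1)\iff \ell^*_{\mathbf c,\mathbf P}>-1,$$ and $$\mathcal{E}(\mathbf c,\mathbf P)\Subset\mathcal{B}(\mathbf 0,1)\iff \ell^*_{\mathbf c,\mathbf P}=-1.$$
   Context: $\mathcal{E}(\mathbf c,\mathbf P)=\{\mathbf x\in\mathbb{R}^n:(\mathbf x-\mathbf c)^\top\mathbf P(\mathbf x-\mathbf c)\le 1\}$; $\mathcal{B}(\mathbf 0,1)=\{\mathbf x:\mathbf x^\top\mathbf x\le1\}$ and $\operatorname{int}\mathcal{B}(\mathbf 0,1)$ is the open unit ball. $\mathcal{E}\Subset\mathcal{E}_0$ means $\mathcal{E}\subseteq\mathcal{E}_0$ and $\partial\mathcal{E}\cap\partial\mathcal{E}_0\neq\emptyset$. Let $\mathbf P=\mathbf V\mathbf D\mathbf V^\top$ be a spectral decomposition with $\mathbf V$ orthogonal and $\mathbf D$ diagonal with entries $\lambda_i=D_{ii}$; let $\bar{\mathbf c}=\mathbf V^\top\mathbf c$, $S(\bar{\mathbf c})=\{i:\bar c_i\ne0\}$, and $\lambda_{\min}(\mathbf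 P)$ the smallest eigenvalue of $\mathbf P$. Set $\mathcal{I}_{\mathbf P}=(\lambda_{\min}(\mathbf P)^{-1},\infty)$ if some $i\in S(\bar{\mathbf c})$ has $\lambda_i=\lambda_{\min}(\mathbf P)$, and $\mathcal{I}_{\mathbf P}=[\lambda_{\min}(\mathbf P)^{-1},\infty)$ otherwise; and $\ell_{\mathbf c,\mathbf P}(\beta)=-\beta-\sum_{i\in S(\bar{\mathbf c})}\bar c_i^2\frac{\lambda_i\beta}{\lambda_i\beta-1}$ for $\beta\in\mathcal{I}_{\mathbf P}$. *)

From HB Require Import structures.
From mathcomp Require Import all_boot all_order all_algebra.
From mathcomp Require Import all_classical all_reals all_analysis.
Set Implicit Arguments. Unset Strict Implicit. Unset Printing Implicit Defensive.
Import Order.TTheory GRing.Theory Num.Theory.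
Import numFieldNormedType.Exports.
Local Open Scope classical_set_scope.
Local Open Scope ring_scope.

Section Defs.
Context {R : realType} {n : nat}.

Definition sym_posdef (P : 'M[R]_n) : Prop :=
  P^T = P /\ forall x : 'cV[R]_n, x != 0 -> 0 < (x^T *m P *m x) 0 0.

Definition ellipsoid (c : 'cV[R]_n) (P : 'M[R]_n) : set 'cV[R]_n :=
  [set x | ((x - c)^T *m P *m (x - c)) 0 0 <= 1].

Definition unit_ball : set 'cV[R]_n := [set x | (x^T *m x) 0 0 <= 1].
Definition open_unit_ball : set 'cV[R]_n := [set x | (x^T *m x) 0 0 < 1].

Definition bdry (A : set 'cV[R]_n) : set 'cV[R]_n := closure A `\` A°.

Definition touching_incl (E E0 : set 'cV[R]_n) : Prop :=
  E `<=` E0 /\ bdry E `&` bdry E0 !=set0.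

Definition lambda_min (P : 'M[R]_n) : R := inf [set a : R | eigenvalue P a].

Definition spectral_decomp (P V D : 'M[R]_n) : Prop :=
  V^T *m V = 1%:M /\ is_diag_mx D /\ P = V *m D *m V^T.

Definition I_P (c : 'cV[R]_n) (P V D : 'M[R]_n) : set R :=
  let cbar := V^T *m c in
  if `[< exists i : 'I_n, cbar i 0 != 0 /\ D i i = lambda_min P >]
  then `](lambda_min P)^-1, +oo[%classic
  else `[(lambda_min P)^-1, +oo[%classic.

Definition ell (c : 'cV[R]_n) (V D : 'M[R]_n) (beta : R) : R :=
  let cbar := V^T *m c in
  - beta - \sum_(i < n | cbar i 0 != 0)
             (cbar i 0) ^+ 2 * ((D i i * beta) / (D i i * beta - 1)).

Definition ell_star (c : 'cV[R]_n) (P V D : 'M[R]_n) : R :=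
  sup [set ell c V D b | b in I_P c P V D].

End Defs.

(* The theorem reduces to the identity  ell^*_{c,P} = - max_{x in E(c,P)} |x|^2,
   after which both equivalences are elementary topology: E(c,P) is closed and
   the unit sphere is the boundary of the unit ball.

   In the eigencoordinates y = V^T x, with lam_i = D_ii and alpha = V^T c, the
   problem is to maximise sum_i y_i^2 subject to sum_i lam_i (y_i - alpha_i)^2 <= 1,
   and -ell(beta) is its Lagrangian dual function.  Writing t = lam_i beta,
     t (y - a)^2 + a^2 t/(t - 1) - y^2 = ((t - 1) y - t a)^2 / (t - 1),
   so on I_P every coordinate gap is nonnegative (weak duality), and it vanishes
   at y = t a/(t - 1).  The constraint value h(beta) at this stationary point
   tends to 0 as beta grows; if h >= 1 somewhere on I_P, the intermediate value
   theorem gives a beta with h(beta) = 1.  Otherwise h is bounded on I_P, which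
   forces beta = 1/lambda_min into I_P; a coordinate j with lam_j = lambda_min
   then has alpha_j = 0 and a gap that vanishes identically, so y_j can absorb
   the missing slack 1 - h(beta). *)

From HB Require Import structures.
From mathcomp Require Import all_boot all_order all_algebra.
From mathcomp Require Import all_classical all_reals all_analysis.
From mathcomp Require Import ring lra.
Import Order.TTheory GRing.Theory Num.Theory.
Import numFieldNormedType.Exports.
Local Open Scope classical_set_scope.
Local Open Scope ring_scope.

Lemma sup_eq_max {R : realType} (S : set R) (m : R) :
  S m -> ubound S m -> sup S = m.
Proof.
move=> Sm ubm; apply/le_anti/andP; split; first by rewrite ge_sup //; exists m.
by apply: sup_upper_bound => //; split; exists m.
Qed.

Lemma inf_eq_min {R : realType} (S : set R) (m : R) :
  S m -> lbound S m -> inf S = m.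
Proof.
move=> Sm lbm; rewrite /inf (@sup_eq_max _ _ (- m)) ?opprK //
  => _ [x Sx <-]; rewrite lerN2; exact: lbm.
Qed.

Definition lagrange_gap {R : realFieldType} (t a y : R) : R :=
  t * (y - a) ^+ 2 + (if a != 0 then a ^+ 2 * (t / (t - 1)) else 0) - y ^+ 2.

Section LagrangeGap.
Context {R : realFieldType}.
Implicit Types t a y : R.

Lemma lagrange_gapE t a y : a != 0 -> t != 1 ->
  lagrange_gap t a y = ((t - 1) * y - t * a) ^+ 2 / (t - 1).
Proof.
by move=> a0 t1; rewrite /lagrange_gap a0; field; rewrite subr_eq0.
Qed.

Lemma lagrange_gap0 t y : lagrange_gap t 0 y = (t - 1) * y ^+ 2.
Proof. by rewrite /lagrange_gap eqxx /=; ring. Qed.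

Lemma lagrange_gap_ge0 t a y :
  1 <= t -> (a != 0 -> 1 < t) -> 0 <= lagrange_gap t a y.
Proof.
move=> t_ge1 t_gt1; have [->|a0] := eqVneq a 0.
  by rewrite lagrange_gap0 mulr_ge0 ?sqr_ge0 ?subr_ge0.
have t1 := t_gt1 a0.
by rewrite lagrange_gapE ?(gt_eqF t1) // divr_ge0 ?sqr_ge0 // subr_ge0 ltW.
Qed.

Lemma lagrange_gap_stationary t a :
  (a != 0 -> t != 1) -> lagrange_gap t a (t * a / (t - 1)) = 0.
Proof.
move=> t_neq1; have [->|a0] := eqVneq a 0.
  by rewrite lagrange_gap0 mulr0 mul0r expr0n /= mulr0.
have t1 : t - 1 != 0 by rewrite subr_eq0 t_neq1.
rewrite lagrange_gapE ?t_neq1 //.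
have -> : (t - 1) * (t * a / (t - 1)) - t * a = 0 by field.
by rewrite expr0n mul0r.
Qed.

End LagrangeGap.

Section LagrangeDuality.
Context {R : realType} {I : finType}.
Variables lam alpha : I -> R.
Hypothesis lam_gt0 : forall i, 0 < lam i.

Definition primal_constraint (y : I -> R) := \sum_i lam i * (y i - alpha i) ^+ 2.
Definition primal_objective (y : I -> R) := \sum_i y i ^+ 2.

Definition dual_feasible : set R := [set b | [/\ 0 <= b,
  forall i, 1 <= lam i * b & forall i, alpha i != 0 -> 1 < lam i * b]].

Definition dual_sum (b : R) :=
  \sum_(i | alpha i != 0) alpha i ^+ 2 * (lam i * b / (lam i * b - 1)).

Definition stationary_point (b : R) (i : I) :=
  lam i * b * alpha i / (lam i * b - 1).

Definition stationary_constraint (b : R) :=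
  \sum_(i | alpha i != 0) lam i * alpha i ^+ 2 / (lam i * b - 1) ^+ 2.

Lemma dual_feasible_ge a b : dual_feasible a -> a <= b -> dual_feasible b.
Proof.
move=> [a0 a_ge1 a_gt1] ab; have ab_i i : lam i * a <= lam i * b.
  by rewrite ler_pM2l.
split=> [|i|i ai]; first exact: le_trans ab.
  exact: le_trans (ab_i i).
exact: lt_le_trans (a_gt1 i ai) (ab_i i).
Qed.

Lemma sum_lagrange_gap b y :
  \sum_i lagrange_gap (lam i * b) (alpha i) (y i) =
    b * primal_constraint y + dual_sum b - primal_objective y.
Proof.
rewrite /lagrange_gap sumrB big_split /= /dual_sum [in RHS]big_mkcond /=.
rewrite /primal_constraint mulr_sumr; congr (_ + _ - _).
by apply: eq_bigr => i _; ring.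
Qed.

Lemma weak_duality b y : dual_feasible b -> primal_constraint y <= 1 ->
  primal_objective y <= b + dual_sum b.
Proof.
move=> [b0 b_ge1 b_gt1] y_le1.
have : 0 <= \sum_i lagrange_gap (lam i * b) (alpha i) (y i).
  by apply: sumr_ge0 => i _; apply: lagrange_gap_ge0 => // /b_gt1.
rewrite sum_lagrange_gap; have := ler_piMr b0 y_le1; lra.
Qed.

Lemma objective_of_gap0 b y :
  (forall i, lagrange_gap (lam i * b) (alpha i) (y i) = 0) ->
  primal_constraint y = 1 -> primal_objective y = b + dual_sum b.
Proof.
move=> gap0 y_eq1; have := sum_lagrange_gap b y.
rewrite big1 // y_eq1 mulr1; lra.
Qed.

Lemma stationary_gap b i : dual_feasible b ->
  lagrange_gap (lam i * b) (alpha i) (stationary_point b i) = 0.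
Proof.
by move=> [_ _ b_gt1]; apply: lagrange_gap_stationary => /b_gt1 ?; rewrite gt_eqF.
Qed.

Lemma stationary_constraintE b : dual_feasible b ->
  primal_constraint (stationary_point b) = stationary_constraint b.
Proof.
move=> [_ _ b_gt1]; rewrite /stationary_constraint [RHS]big_mkcond /=.
apply: eq_bigr => i _; rewrite /stationary_point; case: ifPn => [ai|].
  have t1 : lam i * b - 1 != 0 by rewrite subr_eq0 gt_eqF ?b_gt1.
  by field.
by rewrite negbK => /eqP ->; rewrite mulr0 mul0r subr0 expr0n /= mulr0.
Qed.

Lemma stationary_constraint_continuous a b : dual_feasible a ->
  {within `[a, b], continuous stationary_constraint}.
Proof.
move=> fa; apply: continuous_in_subspaceT => x.
rewrite inE /= in_itv /= => /andP [ax _].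
have [_ _ x_gt1] := dual_feasible_ge _ _ fa ax.
have term_cont i : alpha i != 0 ->
    {for x, continuous (fun z : R => lam i * alpha i ^+ 2 / (lam i * z - 1) ^+ 2)}.
  move=> /x_gt1 x_gt1i; apply: continuousM; first exact: cvg_cst.
  apply: continuousV; first by rewrite expf_neq0 // subr_eq0 gt_eqF.
  have affine : {for x, continuous (fun z : R => lam i * z - 1)}.
    apply: continuousB; last exact: cvg_cst.
    by apply: continuousM; [exact: cvg_cst | exact: cvg_id].
  rewrite (_ : (fun z => _) = fun z => (lam i * z - 1) * (lam i * z - 1)).
    exact: continuousM.
  by apply/funext => z; rewrite expr2.
exact: (cvg_big add_continuous).
Qed.

Section MinimalCoefficient.
Variable j : I.
Hypothesis lam_min : forall i, lam j <= lam i.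

Lemma dual_feasible_gt b : (lam j)^-1 < b -> dual_feasible b.
Proof.
move=> jb; have lj := lam_gt0 j.
have b_gt0 : 0 < b by apply: le_lt_trans jb; rewrite invr_ge0 ltW.
have lt1 i : 1 < lam i * b.
  apply: lt_le_trans (ler_wpM2r (ltW b_gt0) (lam_min i)).
  by rewrite -(ltr_pM2l lj) mulfV ?gt_eqF in jb.
by split=> [|i|i _]; [exact: ltW | exact: ltW | exact: lt1].
Qed.

Lemma inv_min_dual_feasible :
  ~ (exists i, alpha i != 0 /\ lam i = lam j) -> dual_feasible (lam j)^-1.
Proof.
move=> no_min_support; have lj := lam_gt0 j.
have ge1 i : 1 <= lam i * (lam j)^-1 by rewrite ler_pdivlMr // mul1r.
split=> [|//|i ai]; first by rewrite invr_ge0 ltW.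
rewrite ltr_pdivlMr // mul1r lt_neqAle lam_min andbT.
by apply/eqP => ji; apply: no_min_support; exists i.
Qed.

Lemma dual_feasibleE : dual_feasible =
  if `[< exists i, alpha i != 0 /\ lam i = lam j >]
  then `](lam j)^-1, +oo[%classic else `[(lam j)^-1, +oo[%classic.
Proof.
have lj := lam_gt0 j.
apply/seteqP; split=> b; case: asboolP => [[i [ai li]]|no_min_support] /=;
  rewrite in_itv /= andbT.
- by move=> [_ _ /(_ i ai) ib]; rewrite -(ltr_pM2l lj) mulfV ?gt_eqF // -li.
- by move=> [_ /(_ j) jb _]; rewrite -(ler_pM2l lj) mulfV ?gt_eqF.
- exact: dual_feasible_gt.
- exact/dual_feasible_ge/inv_min_dual_feasible.
Qed.

Lemma stationary_constraint_eventually_lt1 :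
  exists b, forall b', b <= b' -> stationary_constraint b' < 1.
Proof.
pose K := \sum_(i | alpha i != 0) lam i * alpha i ^+ 2.
have K_ge0 : 0 <= K by apply: sumr_ge0 => i _; rewrite mulr_ge0 ?sqr_ge0 ?ltW.
have lj := lam_gt0 j.
exists ((2 + K) / lam j) => b' bb'.
have large i : 1 + K <= lam i * b' - 1.
  have : lam j * ((2 + K) / lam j) <= lam i * b'.
    apply: ler_pM; [exact: ltW | | exact: lam_min | exact: bb'].
    by rewrite divr_ge0 ?ltW //; lra.
  by rewrite mulrC divfK ?gt_eqF //; lra.
have : stationary_constraint b' <= K / (1 + K) ^+ 2.
  rewrite /stationary_constraint {1}/K mulr_suml; apply: ler_sum => i _.
  apply: ler_wpM2l; first by rewrite mulr_ge0 ?sqr_ge0 ?ltW.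
  have li := large i.
  by rewrite lef_pV2 ?posrE ?exprn_gt0 ?ler_sqr ?nnegrE //; lra.
have : K / (1 + K) ^+ 2 < 1.
  have K1 : 0 < 1 + K by lra.
  by rewrite ltr_pdivrMr ?exprn_gt0 // mul1r; nra.
lra.
Qed.

Lemma exists_constraint_ge1_of_infeasible :
  ~ dual_feasible (lam j)^-1 ->
  exists2 a, dual_feasible a & 1 <= stationary_constraint a.
Proof.
move=> infeasible; have lj := lam_gt0 j.
have [i [ai li]] : exists i, alpha i != 0 /\ lam i = lam j.
  by apply: contra_notP infeasible; exact: inv_min_dual_feasible.
pose d := Num.min 1 (lam j * alpha i ^+ 2).
have d_gt0 : 0 < d by rewrite lt_min ltr01 mulr_gt0 // exprn_even_gt0.
have d_le1 : d <= 1 by rewrite ge_min lexx.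
have d_le : d <= lam j * alpha i ^+ 2 by rewrite ge_min lexx orbT.
exists ((1 + d) / lam j).
  by apply: dual_feasible_gt; rewrite ltr_pdivlMr // mulVf ?gt_eqF //; lra.
rewrite /stationary_constraint (bigD1 i) //=.
have -> : lam i * ((1 + d) / lam j) - 1 = d.
  by rewrite li mulrC divfK ?gt_eqF //; ring.
rewrite -[leLHS]addr0; apply: lerD.
  by rewrite li ler_pdivlMr ?exprn_gt0 // mul1r; nra.
by apply: sumr_ge0 => k _; rewrite divr_ge0 ?sqr_ge0 // mulr_ge0 ?sqr_ge0 ?ltW.
Qed.

Lemma tight_of_constraint_ge1 a :
  dual_feasible a -> 1 <= stationary_constraint a ->
  exists2 b, dual_feasible b & stationary_constraint b = 1.
Proof.
move=> fa a_ge1; have [b small] := stationary_constraint_eventually_lt1.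
have a_le : a <= Num.max a b by rewrite le_max lexx.
have small_ab : stationary_constraint (Num.max a b) < 1.
  by apply: small; rewrite le_max lexx orbT.
have [|x] := @IVT _ _ _ _ 1 a_le (stationary_constraint_continuous _ _ fa).
  by rewrite ge_min le_max a_ge1 (ltW small_ab) orbT.
rewrite in_itv /= => /andP [ax _] x_eq1; exists x => //.
exact: dual_feasible_ge _ _ fa ax.
Qed.

Lemma tight_degenerate : dual_feasible (lam j)^-1 ->
  stationary_constraint (lam j)^-1 <= 1 ->
  exists2 y, primal_constraint y = 1 &
    primal_objective y = (lam j)^-1 + dual_sum (lam j)^-1.
Proof.
set b := (lam j)^-1 => fb b_le1; have lj := lam_gt0 j.
have ljb : lam j * b = 1 by rewrite mulfV ?gt_eqF.
have aj : alpha j = 0.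
  by case: fb => _ _ /(_ j); case: eqVneq => // _ /(_ isT); rewrite ljb ltxx.
pose s := Num.sqrt ((1 - stationary_constraint b) / lam j).
pose y i := if i == j then s else stationary_point b i.
have gap0 i : lagrange_gap (lam i * b) (alpha i) (y i) = 0.
  rewrite /y; case: eqVneq => [->|_]; last exact: stationary_gap.
  by rewrite aj lagrange_gap0 ljb subrr mul0r.
have st_j : stationary_point b j = 0 by rewrite /stationary_point aj mulr0 mul0r.
have off_j : primal_constraint (stationary_point b) =
    \sum_(i | i != j) lam i * (stationary_point b i - alpha i) ^+ 2.
  by rewrite /primal_constraint (bigD1 j) //= st_j aj subrr expr0n /= mulr0 add0r.
have y_eq1 : primal_constraint y = 1.
  rewrite /primal_constraint (bigD1 j) //= {1}/y eqxx aj subr0.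
  rewrite (eq_bigr (fun i => lam i * (stationary_point b i - alpha i) ^+ 2)); last first.
    by move=> i /negbTE ij; rewrite /y ij.
  rewrite -off_j stationary_constraintE // sqr_sqrtr; last first.
    by rewrite divr_ge0 ?subr_ge0 // ltW.
  by field; rewrite gt_eqF.
by exists y => //; exact: objective_of_gap0.
Qed.

Lemma strong_duality_tight : exists2 b, dual_feasible b &
  exists2 y, primal_constraint y = 1 & primal_objective y = b + dual_sum b.
Proof.
have [[fb b_le1]|not_degenerate] :=
  pselect (dual_feasible (lam j)^-1 /\ stationary_constraint (lam j)^-1 <= 1).
  by exists (lam j)^-1 => //; exact: tight_degenerate.
have [a fa a_ge1] : exists2 a, dual_feasible a & 1 <= stationary_constraint a.
  have [fb|] := pselect (dual_feasible (lam j)^-1); last first.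
    exact: exists_constraint_ge1_of_infeasible.
  exists (lam j)^-1 => //; rewrite ltW // ltNge; apply/negP => b_le1.
  exact: not_degenerate.
have [b fb b_eq1] := tight_of_constraint_ge1 _ fa a_ge1.
exists b => //; exists (stationary_point b); first by rewrite stationary_constraintE.
apply: objective_of_gap0 => [i|]; first exact: stationary_gap.
by rewrite stationary_constraintE.
Qed.

End MinimalCoefficient.

Lemma strong_duality : exists2 b, dual_feasible b &
  exists2 y, primal_constraint y <= 1 & primal_objective y = b + dual_sum b.
Proof.
case: (pickP (xpredT : pred I)) => [i0 _|I0].
  have [j _ j_min] := @arg_minP _ _ _ i0 xpredT lam isT.
  have [b fb [y y_eq1 y_obj]] := strong_duality_tight j (fun i => j_min i isT).
  by exists b => //; exists y; rewrite ?y_eq1.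
have sum0 (P : pred I) (F : I -> R) : \sum_(i | P i) F i = 0.
  by apply: big1 => i; have := I0 i.
exists 0; first by split=> // i; have := I0 i.
exists (fun=> 0); first by rewrite /primal_constraint sum0.
by rewrite /primal_objective /dual_sum !sum0 addr0.
Qed.

End LagrangeDuality.

Section Eigenvalues.
Context {F : fieldType} {n : nat}.

Lemma eigenvalue_diag (D : 'M[F]_n) a :
  is_diag_mx D -> eigenvalue D a <-> exists i, D i i = a.
Proof.
move=> /is_diag_mx_is_trig Dtrig.
rewrite eigenvalue_root_char char_poly_trig // rootE horner_prod.
split=> [/prodf_eq0 [i _]|[i <-]].
  by rewrite hornerXsubC subr_eq0 => /eqP; exists i.
by apply/prodf_eq0; exists i; rewrite ?hornerXsubC ?subrr.
Qed.

Lemma eigenvalue_orthogonal_conj (V D : 'M[F]_n) a : V^T *m V = 1%:M ->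
  eigenvalue (V *m D *m V^T) a = eigenvalue D a.
Proof.
move=> VtV; have VVt : V *m V^T = 1%:M by apply: mulmx1C.
apply/eigenvalueP/eigenvalueP => [[v v_eig v0]|[w w_eig w0]].
  exists (v *m V); first by rewrite scalemxAl -v_eig -!mulmxA VtV mulmx1.
  by apply: contraNneq v0 => vV0; rewrite -[v]mulmx1 -VVt mulmxA vV0 mul0mx.
exists (w *m V^T); first by rewrite !mulmxA -(mulmxA w) VtV mulmx1 w_eig -scalemxAl.
by apply: contraNneq w0 => wVt0; rewrite -[w]mulmx1 -VtV mulmxA wVt0 mul0mx.
Qed.

End Eigenvalues.

Section QuadraticForms.
Context {R : realType} {n : nat}.

Lemma qform_diag (D : 'M[R]_n) (w : 'cV[R]_n) : is_diag_mx D ->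
  (w^T *m D *m w) 0 0 = \sum_i D i i * w i 0 ^+ 2.
Proof.
move=> /is_diag_mxP Ddiag; rewrite mxE; apply: eq_bigr => i _.
rewrite mxE (bigD1 i) //= big1 ?addr0 => [|k ki]; last by rewrite Ddiag ?mulr0.
by rewrite !mxE expr2; ring.
Qed.

Lemma sqnormE (w : 'cV[R]_n) : (w^T *m w) 0 0 = \sum_i w i 0 ^+ 2.
Proof. by rewrite mxE; apply: eq_bigr => i _; rewrite mxE expr2. Qed.

End QuadraticForms.

Section SpectralCoordinates.
Context {R : realType} {n : nat} {P V D : 'M[R]_n}.
Hypothesis sd : spectral_decomp P V D.

Lemma qform_spectral (x : 'cV[R]_n) :
  (x^T *m P *m x) 0 0 = \sum_i D i i * (V^T *m x) i 0 ^+ 2.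
Proof.
have [_ [Ddiag ->]] := sd.
by rewrite -qform_diag // trmx_mul trmxK !mulmxA.
Qed.

Lemma sqnorm_spectral (x : 'cV[R]_n) :
  (x^T *m x) 0 0 = \sum_i (V^T *m x) i 0 ^+ 2.
Proof.
have [VtV _] := sd; have VVt : V *m V^T = 1%:M by apply: mulmx1C.
by rewrite -sqnormE trmx_mul trmxK mulmxA -(mulmxA x^T) VVt mulmx1.
Qed.

Lemma ellipsoid_spectral (c x : 'cV[R]_n) :
  ellipsoid c P x <-> primal_constraint (fun i => D i i)
    (fun i => (V^T *m c) i 0) (fun i => (V^T *m x) i 0) <= 1.
Proof.
have coordB i : (V^T *m (x - c)) i 0 = (V^T *m x) i 0 - (V^T *m c) i 0.
  by rewrite mulmxBr !mxE.
by rewrite /ellipsoid /= qform_spectral; under eq_bigr do rewrite coordB.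
Qed.

Lemma eigenvalue_spectral a : eigenvalue P a <-> exists i, D i i = a.
Proof.
have [VtV [Ddiag ->]] := sd.
by rewrite eigenvalue_orthogonal_conj //; exact: eigenvalue_diag.
Qed.

Lemma lambda_min_spectral : (0 < n)%N ->
  exists2 j, lambda_min P = D j j & forall i, D j j <= D i i.
Proof.
move=> n_gt0.
have [j _ j_min] := @arg_minP _ _ _ (Ordinal n_gt0) xpredT (fun i => D i i) isT.
exists j => [|i]; last exact: j_min.
apply: inf_eq_min; first by apply/eigenvalue_spectral; exists j.
by move=> _ /eigenvalue_spectral [i <-]; exact: j_min.
Qed.

Lemma lambda_min0 : n = 0%N -> lambda_min P = 0.
Proof.
move=> n0; rewrite /lambda_min (_ : [set a | _] = set0) ?inf0 //.
by apply/seteqP; split=> // a /eigenvalue_spectral [[k k_lt _]]; move: k_lt; rewrite n0.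
Qed.

Hypothesis Ppd : sym_posdef P.

Lemma spectral_diag_gt0 i : 0 < D i i.
Proof.
have [_ Ppos] := Ppd; have [VtV _] := sd.
pose e : 'cV[R]_n := V *m delta_mx i 0.
have Ve : V^T *m e = delta_mx i 0 by rewrite mulmxA VtV mul1mx.
have e0 : e != 0.
  apply: contra_neq (oner_neq0 R) => e0; move: Ve.
  by rewrite e0 mulmx0 => /matrixP /(_ i 0); rewrite !mxE !eqxx.
have := Ppos e e0; rewrite qform_spectral Ve (bigD1 i) //= big1 => [|k ki].
  by rewrite mxE !eqxx expr1n mulr1 addr0.
by rewrite mxE (negbTE ki) expr0n mulr0.
Qed.

Lemma I_P_dual_feasible (c : 'cV[R]_n) :
  I_P c P V D = dual_feasible (fun i => D i i) (fun i => (V^T *m c) i 0).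
Proof.
have [n0|n_gt0] := posnP n.
  have no_index (i : 'I_n) : False by case: i => k; rewrite n0.
  rewrite /I_P (lambda_min0 n0) invr0 /=.
  case: asboolP => [[i _]|_]; first by case: (no_index i).
  apply/seteqP; split=> b /=; rewrite in_itv /= andbT; last by case.
  by move=> b0; split=> // i; case: (no_index i).
have [j lam_j j_min] := lambda_min_spectral n_gt0.
by rewrite /I_P lam_j (dual_feasibleE _ _ spectral_diag_gt0 _ j_min).
Qed.

Lemma ell_star_farthest (c : 'cV[R]_n) : exists x, [/\ ellipsoid c P x,
  (x^T *m x) 0 0 = - ell_star c P V D &
  forall z, ellipsoid c P z -> (z^T *m z) 0 0 <= (x^T *m x) 0 0].
Proof.
have [VtV _] := sd.
pose lam i := D i i; pose alpha i := (V^T *m c) i 0.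
have ellE b : ell c V D b = - b - dual_sum lam alpha b by [].
have weak z b : ellipsoid c P z -> I_P c P V D b ->
    (z^T *m z) 0 0 <= b + dual_sum lam alpha b.
  rewrite I_P_dual_feasible sqnorm_spectral => /ellipsoid_spectral Ez fb.
  exact: weak_duality fb Ez.
have [b fb [y y_le1 y_obj]] := strong_duality lam alpha spectral_diag_gt0.
pose x := V *m \col_i y i.
have coord_x i : (V^T *m x) i 0 = y i by rewrite mulmxA VtV mul1mx mxE.
have Ex : ellipsoid c P x.
  apply/ellipsoid_spectral; rewrite /primal_constraint.
  by under eq_bigr do rewrite coord_x.
have x_sqnorm : (x^T *m x) 0 0 = b + dual_sum lam alpha b.
  by rewrite sqnorm_spectral -y_obj; apply: eq_bigr => i _; rewrite coord_x.
have Ib : I_P c P V D b by rewrite I_P_dual_feasible.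
exists x; split=> // [|z /weak/(_ Ib)]; last by rewrite x_sqnorm.
rewrite /ell_star (@sup_eq_max _ _ (ell c V D b)).
- by rewrite ellE x_sqnorm; lra.
- by exists b.
- by move=> _ [b' Ib' <-]; have := weak x b' Ex Ib'; rewrite !ellE x_sqnorm; lra.
Qed.

End SpectralCoordinates.

Lemma continuous_sumr {K : numFieldType} {T : topologicalType} {I : Type}
    (r : seq I) (P : pred I) (F : I -> T -> K) (x : T) :
  (forall i, P i -> {for x, continuous (F i)}) ->
  {for x, continuous (fun x => \sum_(i <- r | P i) F i x)}.
Proof. exact: (cvg_big (@add_continuous K)). Qed.

Section UnitBall.
Context {R : realType} {n : nat}.

Lemma continuous_qform (A : 'M[R]_n) (c : 'cV[R]_n) :
  continuous (fun x : 'cV[R]_n => ((x - c)^T *m A *m (x - c)) 0 0).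
Proof.
have -> : (fun x : 'cV[R]_n => ((x - c)^T *m A *m (x - c)) 0 0) =
    (fun x => \sum_j (\sum_k (x k 0 - c k 0) * A k j) * (x j 0 - c j 0)).
  apply/funext => x; rewrite mxE; apply: eq_bigr => j _; rewrite !mxE.
  by congr (_ * _); apply: eq_bigr => k _; rewrite !mxE.
have coordB i x : {for x, continuous (fun x : 'cV[R]_n => x i 0 - c i 0)}.
  by apply: continuousB; [exact: (@coord_continuous R n 1 i 0 x) | exact: cst_continuous].
move=> x; apply: continuous_sumr => j _; apply: continuousM; last exact: coordB.
apply: continuous_sumr => k _.
by apply: continuousM; [exact: coordB | exact: cst_continuous].
Qed.

Lemma continuous_sqnorm : continuous (fun x : 'cV[R]_n => (x^T *m x) 0 0).
Proof.
have := continuous_qform 1%:M 0.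
by under eq_fun do rewrite subr0 mulmx1.
Qed.

Lemma closed_ellipsoid (c : 'cV[R]_n) (P : 'M[R]_n) : closed (ellipsoid c P).
Proof.
have -> : ellipsoid c P =
  (fun x => ((x - c)^T *m P *m (x - c)) 0 0) @^-1` [set r | r <= 1] by [].
by apply: preimage_closed => [x _|]; [exact: continuous_qform | exact: closed_le].
Qed.

Lemma open_unit_ball_interior : open_unit_ball `<=` (@unit_ball R n)°.
Proof.
rewrite -open_subsetE; first by move=> x /ltW.
have -> : @open_unit_ball R n = (fun x => (x^T *m x) 0 0) @^-1` [set r | r < 1] by [].
by apply: open_comp => [x _|]; [exact: continuous_sqnorm | exact: open_lt].
Qed.

Lemma unit_sphere_not_interior (z : 'cV[R]_n) :
  (z^T *m z) 0 0 = 1 -> ~ (@unit_ball R n)° z.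
Proof.
move=> z1 z_int.
have : \forall t \near (1 : R), unit_ball (t *: z).
  by apply: (continuousZr_tmp cvg_id); rewrite /= scale1r.
move=> /nbhs_ballP [e /= e_gt0 e_ball].
have : unit_ball ((1 + e / 2) *: z).
  apply: e_ball; rewrite -ball_normE /ball_ /= opprD addrA subrr add0r normrN.
  by rewrite ger0_norm ?divr_ge0 ?ltW // ltr_pdivrMr // ltr_pMr // ltr1n.
rewrite /unit_ball /= sqnormE.
rewrite (eq_bigr (fun i => (1 + e / 2) ^+ 2 * z i 0 ^+ 2)) => [|i _]; last first.
  by rewrite mxE exprMn.
by rewrite -mulr_sumr -sqnormE z1 mulr1; nra.
Qed.

End UnitBall.

Theorem theorem1 (R : realType) (n : nat) (P : 'M[R]_n) (c : 'cV[R]_n)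
    (V D : 'M[R]_n) :
  sym_posdef P -> spectral_decomp P V D ->
  (ellipsoid c P `<=` open_unit_ball <-> ell_star c P V D > -1) /\
  (touching_incl (ellipsoid c P) unit_ball <-> ell_star c P V D = -1).
Proof.
move=> Ppd sd; have [x [Ex x_norm x_max]] := ell_star_farthest sd Ppd c.
have -> : ell_star c P V D = - (x^T *m x) 0 0 by rewrite x_norm opprK.
split; split.
- by move=> /(_ x Ex); rewrite /open_unit_ball /=; lra.
- by move=> x_lt1 z /x_max; rewrite /open_unit_ball /=; lra.
- move=> [E_sub [z [[z_clE _] [_ z_notint]]]].
  have Ez : ellipsoid c P z.
    by move: z_clE; rewrite -(closure_id _).1 //; exact: closed_ellipsoid.
  have : ~ (z^T *m z) 0 0 < 1 by move/open_unit_ball_interior.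
  have := x_max z Ez; have := E_sub x Ex; rewrite /unit_ball /=; lra.
- move=> x_eq1; have {}x_eq1 : (x^T *m x) 0 0 = 1 by lra.
  have E_sub : ellipsoid c P `<=` unit_ball.
    by move=> z /x_max; rewrite /unit_ball /= x_eq1.
  split=> //; exists x; split; split.
  + exact: subset_closure.
  + by move/(interiorS E_sub); exact: unit_sphere_not_interior.
  + by apply: subset_closure; rewrite /unit_ball /= x_eq1.
  + exact: unit_sphere_not_interior.
Qed.
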